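(* Let $m\neq0$ and $r$ be real numbers. For all integers $n,k\ge0$, $$L_{m,r}(n,k)=\frac{1}{m^k\,k!}\sum_{j=0}^{k}\binom{k}{j}(-1)^{k-j}\prod_{i=0}^{n-1}(2r+jm+im),$$ and for all integers $n\ge k\ge1$, $$L_{m,r}(n,k)=\sum_{j=k}^{n}L_{m,r}(j-1,k-1)\prod_{i=j}^{n-1}(2r+km+im).$$
   Context: For real $m,r$, let $w_{m,r}(n,k)$ and $W_{m,r}(n,k)$ be the $r$-Whitney numbers of the first and second kind, defined by the polynomial identities $\prod_{j=0}^{n-1}(x-r-jm)=\sum_{k=0}^n w_{m,r}(n,k)x^k$ and $x^n=\sum_{k=0}^n W_{m,r}(n,k)\prod_{j=0}^{k-1}(x-r-jm)$ (both vanishing for $k>n$ or $k<0$; empty products equal $1$). The $r$-Whitney-Lah numbers are $L_{m,r}(n,k)=\sum_{j=k}^{n}(-1)^{n-j}w_{m,r}(n,j)W_{m,r}(j,k)$, with $L_{m,r}(n,k)=0$ for $n<k$ or $k<0$. *)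

(* The identities are purely algebraic; we state them over an
   arbitrary real field R (this includes the real numbers). *)
From HB Require Import structures.
From mathcomp Require Import all_boot all_order all_algebra.
Set Implicit Arguments. Unset Strict Implicit. Unset Printing Implicit Defensive.
Import Order.TTheory GRing.Theory Num.Theory.
Local Open Scope ring_scope.

Section Whitney.
Variable R : realFieldType.
Variables m r : R.

Definition wfall (k : nat) : {poly R} :=
  \prod_(j < k) ('X - (r + j%:R * m)%:P).

Definition wW1 (n k : nat) : R := (wfall n)`_k.

(* Coordinates of a polynomial p (of degree <= d) in the basis
   wfall 0, ..., wfall d (each wfall j is monic of degree j): the top
   coordinate is the coefficient of X^d, then recurse on the remainder. *)
Fixpoint wcoord (d : nat) (p : {poly R}) (k : nat) : R :=
  match d with
  | 0 => if k == 0%N then p`_0 else 0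
  | d'.+1 => let c := p`_d in
             if k == d then c else wcoord d' (p - c *: wfall d) k
  end.

Definition wW2 (n k : nat) : R := wcoord n 'X^n k.

Definition wLah (n k : nat) : R :=
  \sum_(k <= j < n.+1) (-1) ^+ (n - j) * wW1 n j * wW2 j k.

Lemma wfall_monic k : wfall k \is monic.
Proof. by apply: monic_prod => i _; apply: monicXsubC. Qed.
Lemma size_wfall k : size (wfall k) = k.+1.
Proof. by rewrite /wfall size_prod_XsubC -[in RHS](card_ord k) cardT enumT. Qed.
Lemma wcoord_spec d (p : {poly R}) : (size p <= d.+1)%N ->
  p = \sum_(k < d.+1) wcoord d p k *: wfall k.
Proof.
elim: d p => [|d IH] p hp /=.
  rewrite big_ord1 /= /wfall big_ord0 alg_polyC.
  by rewrite [LHS]size1_polyC.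
rewrite big_ord_recr /= eqxx.
set c := p`_d.+1.
have hq : (size (p - c *: wfall d.+1)%R <= d.+1)%N.
  have hl : lead_coef (wfall d.+1) = 1 by apply/monicP/wfall_monic.
  apply/leq_sizeP => j hj.
  rewrite coefB coefZ.
  move: hj; rewrite leq_eqVlt => /orP [/eqP <-|hgt].
    have -> : (wfall d.+1)`_d.+1 = lead_coef (wfall d.+1) by rewrite /lead_coef size_wfall.
    by rewrite hl mulr1 subrr.
  rewrite !nth_default ?mulr0 ?subrr // ?size_wfall //.
  by apply: leq_trans hp hgt.
rewrite (eq_bigr (fun k : 'I_d.+1 => wcoord d (p - c *: wfall d.+1) k *: wfall k)).
  by rewrite -IH // subrK.
by move=> i _; rewrite ifN // neq_ltn ltn_ord.
Qed.

Lemma wW2_spec n : 'X^n = \sum_(k < n.+1) wW2 n k *: wfall k.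
Proof. by apply: wcoord_spec; rewrite size_polyXn. Qed.

Lemma wW2_gt n k : (n < k)%N -> wW2 n k = 0.
Proof.
rewrite /wW2; elim: n 'X^n k => [|n IH] p k hk /=.
  by rewrite ifN // -lt0n (leq_ltn_trans _ hk).
by rewrite ifN ?(gtn_eqF hk) // IH // ltnW.
Qed.

Lemma wW1_spec n : wfall n = \sum_(k < n.+1) wW1 n k *: 'X^k.
Proof. by rewrite /wW1 -{1}[wfall n]coefK poly_def size_wfall. Qed.

End Whitney.

(* [wLah n k] is the coordinate on the basis [wfall k] of the rising product
   [Q_n = \prod_(i < n) ('X + r + i m) = (-1)^n wfall n (-'X)]: expanding
   [wfall n] in powers of ['X] and each power in the [wfall] basis gives
   exactly the alternating sum defining [wLah].  Since
   ['X + r + n m = ('X - r - k m) + (2 r + k m + n m)], multiplying by it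
   yields the triangular recurrence
   [L(n+1, k+1) = L(n, k) + (2 r + (k+1) m + n m) L(n, k+1)].
   The normalised binomial sum obeys the same recurrence and initial values,
   and unrolling the recurrence in [n] gives the second formula. *)
From HB Require Import structures.
From mathcomp Require Import all_boot all_order all_algebra.
From mathcomp Require Import ring zify.
Import Order.TTheory GRing.Theory Num.Theory.
Local Open Scope ring_scope.

Section WhitneyLah.
Variable R : realFieldType.
Variables m r : R.
Local Notation wfall := (wfall m r).
Local Notation wLah := (wLah m r).

Lemma wfallS k : wfall k.+1 = wfall k * ('X - (r + k%:R * m)%:P).
Proof. by rewrite /wfall big_ord_recr. Qed.

Lemma coef_wfall_size k : (wfall k)`_k = 1.
Proof. by have := monicP (wfall_monic m r k); rewrite /lead_coef size_wfall. Qed.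

Lemma coef_wfall_gt k j : (k < j)%N -> (wfall k)`_j = 0.
Proof. by move=> ltkj; rewrite nth_default // size_wfall. Qed.

Lemma sum_wfall_eq0 N (a : nat -> R) :
  \sum_(k < N) a k *: wfall k = 0 -> forall k, (k < N)%N -> a k = 0.
Proof.
elim: N => [//|N IH]; rewrite big_ord_recr /= => sum0.
have aN : a N = 0.
  have := congr1 (fun p : {poly R} => p`_N) sum0.
  rewrite coef0 coefD coefZ coef_wfall_size mulr1 coef_sum big1 ?add0r //.
  by move=> i _; rewrite coefZ coef_wfall_gt ?mulr0.
move: sum0; rewrite aN scale0r addr0 => /IH a0 k.
by rewrite ltnS leq_eqVlt => /orP[/eqP->|/a0].
Qed.

Lemma eq_sum_wfall N (a b : nat -> R) :
  \sum_(k < N) a k *: wfall k = \sum_(k < N) b k *: wfall k ->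
  forall k, (k < N)%N -> a k = b k.
Proof.
move=> eq_ab k ltkN; apply/eqP; rewrite -subr_eq0; apply/eqP.
apply: (@sum_wfall_eq0 N (fun k => a k - b k)) ltkN.
by under eq_bigr do rewrite scalerBl; rewrite sumrB eq_ab subrr.
Qed.

Lemma wLah_gt n k : (n < k)%N -> wLah n k = 0.
Proof. by move=> ltnk; rewrite /wLah big_geq. Qed.

Lemma wLah_ord n k :
  wLah n k = \sum_(j < n.+1) (-1) ^+ (n - j) * wW1 m r n j * wW2 m r j k.
Proof.
rewrite /wLah big_geq_mkord big_mkcond /=; apply: eq_bigr => j _.
by case: leqP => // ltjk; rewrite wW2_gt // mulr0.
Qed.

Lemma polyXn_wfall j n : (j <= n)%N ->
  'X^j = \sum_(k < n.+1) wW2 m r j k *: wfall k.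
Proof.
move=> lejn; rewrite (wW2_spec m r j).
rewrite (big_ord_widen n.+1 (fun k => wW2 m r j k *: wfall k)) // big_mkcond.
by apply: eq_bigr => k _; case: ltnP => // ltjk; rewrite wW2_gt // scale0r.
Qed.

Definition wrise n : {poly R} := \prod_(i < n) ('X + (r + i%:R * m)%:P).

Lemma wriseS n : wrise n.+1 = wrise n * ('X + (r + n%:R * m)%:P).
Proof. by rewrite /wrise big_ord_recr. Qed.

Lemma wfall_compN n : wfall n \Po (- 'X) = (-1) ^+ n *: wrise n.
Proof.
elim: n => [|n IH].
  by rewrite /wfall /wrise !big_ord0 -polyC1 comp_polyC expr0 scale1r.
rewrite wfallS wriseS comp_polyM IH comp_polyB comp_polyX comp_polyC.
rewrite exprS mulN1r scaleNr -scalerAl -scalerN; congr (_ *: _).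
by rewrite -mulrN opprD.
Qed.

Lemma wrise_wfall n : wrise n = \sum_(k < n.+1) wLah n k *: wfall k.
Proof.
have -> : wrise n = (-1) ^+ n *: (wfall n \Po (- 'X)).
  by rewrite wfall_compN scalerA -exprMn mulrNN mulr1 expr1n scale1r.
under [RHS]eq_bigr do rewrite wLah_ord scaler_suml.
rewrite exchange_big comp_polyE size_wfall scaler_sumr /=.
apply: eq_bigr => j _; have lejn : (j <= n)%N by rewrite -ltnS.
rewrite -scaleN1r exprZn (@polyXn_wfall j n lejn) !scalerA scaler_sumr.
apply: eq_bigr => k _; rewrite scalerA; congr (_ *: _).
have signE : (-1) ^+ n = (-1) ^+ (n - j) * (-1) ^+ j :> R by rewrite -exprD subnK.
have sign2 : (-1) ^+ j * (-1) ^+ j = 1 :> R by rewrite -exprMn mulrNN mulr1 expr1n.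
by rewrite signE /wW1 [_ * _ * (-1) ^+ j]mulrAC -(mulrA _ _ ((-1) ^+ j)) sign2 mulr1.
Qed.

Definition wgap n k : R := 2 * r + k%:R * m + n%:R * m.

Lemma wLahS n k : (k < n.+2)%N ->
  wLah n.+1 k = (if k is k'.+1 then wLah n k' else 0) + wgap n k * wLah n k.
Proof.
move: k; apply: (@eq_sum_wfall _ (wLah n.+1)
  (fun k => (if k is k'.+1 then wLah n k' else 0) + wgap n k * wLah n k)).
rewrite -wrise_wfall wriseS wrise_wfall mulr_suml.
have shift k : (wLah n k *: wfall k) * ('X + (r + n%:R * m)%:P) =
    wLah n k *: wfall k.+1 + (wgap n k * wLah n k) *: wfall k.
  have -> : 'X + (r + n%:R * m)%:P = ('X - (r + k%:R * m)%:P) + (wgap n k)%:P.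
    by rewrite -addrA -polyCN -polyCD /wgap; congr (_ + _%:P); ring.
  rewrite -scalerAl wfallS mulrDr scalerDr; congr (_ + _).
  by rewrite mulrC mul_polyC scalerA mulrC.
under eq_bigr do rewrite shift.
under [RHS]eq_bigr do rewrite scalerDl.
rewrite !big_split /=; congr (_ + _).
  by rewrite [RHS]big_ord_recl /= scale0r add0r.
by rewrite [RHS]big_ord_recr /= wLah_gt // mulr0 scale0r addr0.
Qed.

Lemma wLahSS n k : wLah n.+1 k.+1 = wLah n k + wgap n k.+1 * wLah n k.+1.
Proof.
case: (ltnP k.+1 n.+2) => [|lenk]; first exact: wLahS.
by rewrite !wLah_gt ?mulr0 ?addr0 //; lia.
Qed.

Lemma wLahS0 n : wLah n.+1 0 = wgap n 0 * wLah n 0.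
Proof. by rewrite wLahS // add0r. Qed.

Lemma wLah00 : wLah 0 0 = 1.
Proof.
rewrite /wLah big_nat1 /wW1 /wW2 /wfall big_ord0 /=.
by rewrite coef1 !expr0 !mul1r.
Qed.

Definition wLah_binom_sum n k : R :=
  \sum_(j < k.+1) 'C(k, j)%:R * (-1) ^+ (k - j) * \prod_(i < n) wgap i j.

Lemma wLah_binom_sum0 k : wLah_binom_sum 0 k = (k == 0%N)%:R.
Proof.
have -> : wLah_binom_sum 0 k = (-1 + 1) ^+ k.
  rewrite exprDn; apply: eq_bigr => j _.
  by rewrite big_ord0 mulr1 expr1n mulr1 mulr_natl.
by rewrite addNr expr0n.
Qed.

Lemma wLah_binom_sumS n k : wLah_binom_sum n.+1 k.+1 =
  wgap n k.+1 * wLah_binom_sum n k.+1 + m * k.+1%:R * wLah_binom_sum n k.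
Proof.
rewrite /wLah_binom_sum big_ord_recr [in RHS]big_ord_recr /=.
rewrite mulrDr mulr_sumr [m * _ * _]mulr_sumr addrAC -big_split /=.
congr (_ + _); last by rewrite binn subnn big_ord_recr /wgap /=; ring.
apply: eq_bigr => j _; have lejk : (j <= k)%N by rewrite -ltnS.
have binS : 'C(k.+1, j)%:R * (k.+1 - j)%:R = k.+1%:R * 'C(k, j)%:R :> R.
  by rewrite -!natrM mul_bin_down mulnC.
rewrite big_ord_recr subSn // exprS /=.
have -> : m * k.+1%:R * ('C(k, j)%:R * (-1) ^+ (k - j) * \prod_(i < n) wgap i j) =
   m * (k.+1%:R * 'C(k, j)%:R) * (-1) ^+ (k - j) * \prod_(i < n) wgap i j by ring.
by rewrite -binS natrB 1?ltnW // /wgap; ring.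
Qed.

Lemma wLah_binom (m_neq0 : m != 0) n k :
  wLah n k = (m ^+ k * k`!%:R)^-1 * wLah_binom_sum n k.
Proof.
elim: n k => [|n IH] [|k].
- by rewrite wLah00 wLah_binom_sum0 expr0 mul1r invr1 mul1r.
- by rewrite wLah_gt // wLah_binom_sum0 mulr0.
- rewrite wLahS0 IH /wLah_binom_sum !big_ord1 big_ord_recr /=.
  by rewrite expr0 !mul1r invr1; ring.
rewrite wLahSS !IH wLah_binom_sumS factS natrM exprS.
have fact_neq0 : k`!%:R != 0 :> R by rewrite pnatr_eq0 -lt0n fact_gt0.
have kS_neq0 : k.+1%:R != 0 :> R by rewrite pnatr_eq0.
by field; rewrite fact_neq0 m_neq0 expf_neq0 // -mulrS kS_neq0.
Qed.

Lemma wLah_unroll n k : wLah n k.+1 =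
  \sum_(k.+1 <= j < n.+1) wLah (j - 1) k * \prod_(j <= i < n) wgap i k.+1.
Proof.
elim: n => [|n IH]; first by rewrite wLah_gt // big_geq.
case: (leqP k.+1 n.+1) => [lekn|ltnk]; last by rewrite wLah_gt // big_geq.
rewrite big_nat_recr //= [X in _ * X]big_geq // mulr1 subn1 wLahSS IH addrC mulr_sumr.
congr (_ + _); apply: eq_big_nat => j /andP[_ ltjn].
by rewrite big_nat_recr //=; ring.
Qed.

End WhitneyLah.

Theorem mainTheorem12 (R : realFieldType) (m r : R) (hm : m != 0) :
  (forall n k : nat,
     wLah m r n k =
       (m ^+ k * (k`!)%:R)^-1 *
       \sum_(j < k.+1) ('C(k, j))%:R * (-1) ^+ (k - j) *
          \prod_(i < n) (2 * r + j%:R * m + i%:R * m))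
  /\
  (forall n k : nat, (1 <= k <= n)%N ->
     wLah m r n k =
       \sum_(k <= j < n.+1)
          wLah m r (j - 1) (k - 1) * \prod_(j <= i < n) (2 * r + k%:R * m + i%:R * m)).
Proof.
split=> [n k|n [//|k] _]; first exact: wLah_binom.
by rewrite wLah_unroll subn1.
Qed.
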